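(* There exist an infinite topological group $G$, a Hausdorff uniform space $X$, and a continuous action $T: G\times X\to X$ of $G$ on $X$ such that: (1) $T$ is topologically transitive; (2) $T$ is not minimal; (3) the set of periodic points of $T$ is dense in $X$; (4) $T$ does not have sensitive dependence on the initial conditions; (5) $T$ is not equicontinuous.
   Context: A group action of a group $G$ on a set $X$ is a map $T:G\times X\to X$ with $T(r,T(s,x))=T(rs,x)$ for all $r,s\in G$, $x\in X$, and $T(e,x)=x$ for all $x\in X$, where $e$ is the identity of $G$. If $X$ is a topological space, $T$ is called continuous if for each $g\in G$ the map $x\mapsto T(g,x)$ is continuous on $X$. A uniform space is a set $X$ with a uniformity $\mathcal V$ (a family of entourages $U\subseteq X\times X$ containing the diagonal, closed under finite intersections up to refinement, and such that each $U\in\mathcal V$ contains $V\circ V^{-1}$ for some $V\in\mathcal V$), with topology generated by the sets $U[x]=\{y:(x,y)\in U\}$; it is Hausdorff if this topology is. The orbit of $x$ is $Tx=\{T(g,x):g\in G\}$ and the stabilizer is $S_T(x)=\{g\in G: T(g,x)=x\}$. $T$ is topologically transitive if for all nonempty open $Y_1,Y_2\subseteq X$ there is $g\in G$ with $T(g,Y_1)\cap Y_2\neq\emptyset$. $T$ is minimal if $\overline{Tx}=X$ for every $x\in X$. A subset $S\subseteq G$ is right syndetic if there is a compact $K\subseteq G$ with $\bigcup_{k\in K}k^{-1}S=G$, where $k^{-1}S=\{t\in G: kt\in S\}$; a point $x$ is periodic if $S_T(x)$ is right syndetic in $G$. $T$ has sensitive dependence on the initial conditions (is sensitive) if there is an entourage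 $U\in\mathcal V$ such that for every $x\in X$ and every neighbourhood $Y$ of $x$ there are $y\in Y$ and $g\in G$ with $(T(g,x),T(g,y))\notin U$. $T$ is equicontinuous at $x$ if for every entourage $U\in\mathcal V$ there is a neighbourhood $Y$ of $x$ with $T(g,Y)\subseteq U[T(g,x)]$ for all $g\in G$; $T$ is equicontinuous if it is equicontinuous at every point. *)

From HB Require Import structures.
From mathcomp Require Import all_boot all_order all_algebra.
From mathcomp Require Import all_classical all_reals all_analysis.
Set Implicit Arguments. Unset Strict Implicit. Unset Printing Implicit Defensive.
Local Open Scope classical_set_scope.

Record topGroup := TopGroup {
  tg_car :> topologicalType;
  tg_mul : tg_car -> tg_car -> tg_car;
  tg_inv : tg_car -> tg_car;
  tg_one : tg_car;
  tg_mulA : forall a b c, tg_mul a (tg_mul b c) = tg_mul (tg_mul a b) c;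
  tg_mul1g : forall a, tg_mul tg_one a = a;
  tg_mulg1 : forall a, tg_mul a tg_one = a;
  tg_mulVg : forall a, tg_mul (tg_inv a) a = tg_one;
  tg_mulgV : forall a, tg_mul a (tg_inv a) = tg_one;
  tg_mul_cont : continuous (fun p : tg_car * tg_car => tg_mul p.1 p.2);
  tg_inv_cont : continuous tg_inv
}.

Section Dyn.
Variables (G : topGroup) (X : uniformType) (T : G -> X -> X).

Definition ga_is_action : Prop :=
  (forall r s x, T r (T s x) = T (tg_mul r s) x) /\ (forall x, T (tg_one G) x = x).

Definition ga_continuous : Prop := forall g, continuous (T g).

Definition orbitT (x : X) : set X := [set T g x | g in [set: G]].

Definition ga_stabilizer (x : X) : set G := [set g | T g x = x].

Definition ga_right_syndetic (S : set G) : Prop :=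
  exists K : set G, compact K /\
    \bigcup_(k in K) [set t | S (tg_mul k t)] = [set: G].

Definition periodic_pt (x : X) : Prop := ga_right_syndetic (ga_stabilizer x).

Definition ga_top_transitive : Prop :=
  forall Y1 Y2 : set X, open Y1 -> open Y2 -> Y1 !=set0 -> Y2 !=set0 ->
    exists g, (T g @` Y1) `&` Y2 !=set0.

Definition minimal_act : Prop := forall x, closure (orbitT x) = [set: X].

Definition sensitive_dep : Prop :=
  exists U, entourage U /\
    forall x (Y : set X), nbhs x Y ->
      exists y g, Y y /\ ~ U (T g x, T g y).

Definition ga_equicontinuous_at (x : X) : Prop :=
  forall U, entourage U -> exists Y : set X, nbhs x Y /\
    forall g y, Y y -> U (T g x, T g y).

Definition ga_equicontinuous : Prop := forall x, ga_equicontinuous_at x.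
End Dyn.

(* The group (Z, +), carrying the indiscrete topology, acts by translation on
   the one-point compactification Z u {oo} of the discrete integers.  Since the
   indiscrete group is compact, every stabilizer is right syndetic, so every
   point is periodic.  The integers are dense isolated points forming a single
   orbit, which gives topological transitivity and rules out sensitivity,
   while the fixed point oo makes the action non-minimal.  Equicontinuity fails
   at oo: points near oo are translated back to 0, far away from oo. *)
From HB Require Import structures.
From mathcomp Require Import all_boot all_order all_algebra.
From mathcomp Require Import all_classical all_reals all_analysis.
From mathcomp Require Import zify.
Set Implicit Arguments. Unset Strict Implicit. Unset Printing Implicit Defensive.
Import GRing.Theory.
Local Open Scope classical_set_scope.

Section GroupActionFacts.
Variables (G : topGroup) (X : uniformType) (T : G -> X -> X).

Lemma compact_group_periodic (x : X) :
  compact [set: G] -> T (tg_one G) x = x -> periodic_pt T x.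
Proof.
move=> Gcpt T1x; exists [set: G]; split => //.
apply/seteqP; split => // t _; exists (tg_inv t) => //.
by rewrite /ga_stabilizer /= tg_mulVg.
Qed.

Lemma isolated_not_sensitive (x : X) : nbhs x [set x] -> ~ sensitive_dep T.
Proof.
move=> xiso [U [entU sensU]].
have [_ [g [-> notU]]] := sensU x _ xiso.
by apply: notU; exact: entourage_refl.
Qed.

Lemma fixed_point_not_minimal (x y : X) :
  (forall g, T g x = x) -> nbhs y [set y] -> y <> x -> ~ minimal_act T.
Proof.
move=> xfix yiso yx /(_ x) orbit_dense.
have : closure (orbitT T x) y by rewrite orbit_dense.
by move=> /(_ _ yiso) [_ [[g _ <-]]]; rewrite xfix => /esym.
Qed.

Lemma transitive_on_dense_top_transitive (D : set X) :
  (forall Y, open Y -> Y !=set0 -> Y `&` D !=set0) ->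
  (forall a b, D a -> D b -> exists g, T g a = b) ->
  ga_top_transitive T.
Proof.
move=> Ddense Dtrans Y1 Y2 oY1 oY2 /(Ddense _ oY1) [a [Y1a Da]].
move=> /(Ddense _ oY2) [b [Y2b Db]]; have [g gab] := Dtrans a b Da Db.
by exists g, b; split => //; exists a.
Qed.

End GroupActionFacts.

Lemma infinite_int : ~ finite_set [set: int].
Proof.
move=> fin; apply: infinite_nat.
by apply: (finite_preimage (f := Posz)) fin => m n _ _ [].
Qed.

Section Indiscrete.
Variable T : choiceType.

Definition indiscrete : Type := T.
HB.instance Definition _ := Choice.on indiscrete.

Definition indiscrete_ent : set_system (indiscrete * indiscrete) :=
  globally setT.

Lemma indiscrete_ent_diagonal A : indiscrete_ent A -> diagonal `<=` A.
Proof. by move=> entA ? _; exact: entA. Qed.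

Lemma indiscrete_ent_inv A : indiscrete_ent A -> indiscrete_ent A^-1%relation.
Proof. by move=> entA ? _; exact: entA. Qed.

Lemma indiscrete_ent_split A :
  indiscrete_ent A -> exists2 B, indiscrete_ent B & (B \; B `<=` A)%relation.
Proof. by move=> entA; exists A => // ? _; exact: entA. Qed.

HB.instance Definition _ := isUniform.Build indiscrete
  (globally_filter _) indiscrete_ent_diagonal indiscrete_ent_inv
  indiscrete_ent_split.

Lemma nbhs_indiscrete (x : indiscrete) A : nbhs x A -> A = setT.
Proof.
by move=> [E entE EA]; apply/seteqP; split => // y _; exact/EA/mem_set/entE.
Qed.

Lemma continuous_indiscrete (U : topologicalType) (f : U -> indiscrete) :
  continuous f.
Proof. by move=> x A /nbhs_indiscrete ->; exact: filterT. Qed.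

Lemma compact_indiscrete (A : set indiscrete) : compact A.
Proof.
move=> F PF FA; have [x Ax] := filter_ex FA; exists x; split => //.
by move=> B C FB /nbhs_indiscrete ->; rewrite setIT; exact: (filter_ex FB).
Qed.

End Indiscrete.

Definition indiscrete_zmod_topGroup (V : zmodType) : topGroup :=
  @TopGroup (indiscrete V) (@GRing.add V) (@GRing.opp V) 0%R
    (@addrA V) (@add0r V) (@addr0 V) (@addNr V) (@addrN V)
    (@continuous_indiscrete V _ _) (@continuous_indiscrete V _ _).

(* Z u {oo}, with [None] as oo. *)
Definition intoo : Type := option int.
HB.instance Definition _ := Choice.on intoo.

Definition beyond (N : nat) (x : intoo) : Prop :=
  if x is Some z then (N <= `|z|)%N else True.

Definition intoo_ent (N : nat) : set (intoo * intoo) :=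
  [set p | p.1 = p.2 \/ (beyond N p.1 /\ beyond N p.2)].

Lemma intoo_entE N a b :
  intoo_ent N (a, b) = (a = b \/ (beyond N a /\ beyond N b)).
Proof. by []. Qed.

Lemma beyond_le N M x : (N <= M)%N -> beyond M x -> beyond N x.
Proof. by case: x => //= z NM; exact: leq_trans. Qed.

Lemma intoo_ent_le N M : (N <= M)%N -> intoo_ent M `<=` intoo_ent N.
Proof.
move=> NM [a b]; rewrite !intoo_entE => -[->|[Ma Mb]]; [by left | right].
by split; exact: beyond_le NM _.
Qed.

Lemma intoo_ent_sym N a b : intoo_ent N (a, b) -> intoo_ent N (b, a).
Proof. by rewrite !intoo_entE => -[->|[]]; [left|right]. Qed.

Lemma intoo_ent_Some z y : intoo_ent `|z|.+1 (Some z, y) -> y = Some z.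
Proof. by rewrite intoo_entE => -[//|[/= zN _]]; move: zN; lia. Qed.

Definition intoo_entourage : set_system (intoo * intoo) :=
  [set E | exists N, intoo_ent N `<=` E].

Lemma intoo_entourage_filter : Filter intoo_entourage.
Proof.
constructor; first by exists 0%N.
- move=> P Q [N NP] [M MQ]; exists (maxn N M) => p p_near; split.
  + by apply/NP/(intoo_ent_le (leq_maxl N M)).
  + by apply/MQ/(intoo_ent_le (leq_maxr N M)).
- by move=> P Q PQ [N NP]; exists N => p /NP /PQ.
Qed.

Lemma intoo_entourage_diagonal A : intoo_entourage A -> diagonal `<=` A.
Proof. by move=> [N NA] [a b] /= ab; apply: NA; left. Qed.

Lemma intoo_entourage_inv A :
  intoo_entourage A -> intoo_entourage A^-1%relation.
Proof. by move=> [N NA]; exists N => -[a b] /intoo_ent_sym /NA. Qed.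

Lemma intoo_entourage_split A :
  intoo_entourage A -> exists2 B, intoo_entourage B & (B \; B `<=` A)%relation.
Proof.
move=> [N NA]; exists (intoo_ent N); first by exists N.
move=> [a c] [b] /=; rewrite !intoo_entE => -[->|[Na Nb]] [<-|[Nb' Nc]];
by apply: NA; rewrite intoo_entE; first [by left | by right].
Qed.

HB.instance Definition _ := isUniform.Build intoo intoo_entourage_filter
  intoo_entourage_diagonal intoo_entourage_inv intoo_entourage_split.

Lemma nbhs_intoo_ent (x : intoo) N : nbhs x [set y | intoo_ent N (x, y)].
Proof. by exists (intoo_ent N) => //; [exists N | move=> y /set_mem]. Qed.

Lemma nbhs_intooP (x : intoo) A :
  nbhs x A -> exists N, forall y, intoo_ent N (x, y) -> A y.
Proof. by move=> [E [N NE] EA]; exists N => y /NE Ey; exact/EA/mem_set. Qed.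

Lemma nbhs_intoo_Some z : nbhs (Some z : intoo) [set Some z].
Proof. by apply: filterS (nbhs_intoo_ent _ `|z|.+1) => y /intoo_ent_Some. Qed.

Lemma intoo_hausdorff : hausdorff_space intoo.
Proof.
move=> [z|] y cl.
  have [_ [-> /intoo_ent_sym /intoo_ent_Some yz]] :=
    cl _ _ (nbhs_intoo_Some z) (nbhs_intoo_ent y `|z|.+1).
  by rewrite yz.
case: y cl => [w|] // cl.
have [p [Np pw]] := cl _ _ (nbhs_intoo_ent None `|w|.+1) (nbhs_intoo_Some w).
by move: Np; rewrite pw => /intoo_ent_sym /intoo_ent_Some.
Qed.

Lemma open_intoo_meets_int (Y : set intoo) :
  open Y -> Y !=set0 -> Y `&` range Some !=set0.
Proof.
move=> oY [[z|] Yx]; first by exists (Some z); split => //; exists z.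
have [N NY] := nbhs_intooP (open_nbhs_nbhs (conj oY Yx)).
exists (Some (Posz N)); split; last by exists (Posz N).
by apply: NY; right; split => /=.
Qed.

Definition Zindiscrete : topGroup := indiscrete_zmod_topGroup int.

Definition translate (g : Zindiscrete) (x : intoo) : intoo :=
  omap (fun z => z + (g : int))%R x.

Lemma translate_action : ga_is_action translate.
Proof.
split; last by case=> //= z; rewrite addr0.
by move=> r s [z|] //=; rewrite -addrA [(s + r)%R]addrC.
Qed.

Lemma beyond_translate N (g : int) x :
  beyond (N + `|g|) x -> beyond N (translate g x).
Proof. by case: x => //= z; lia. Qed.

Lemma translate_continuous : ga_continuous translate.
Proof.
move=> g x A /nbhs_intooP [N NA].
apply: filterS (nbhs_intoo_ent x (N + `|(g : int)|)) => y.
rewrite /= intoo_entE => -[<-|[Nx Ny]].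
  by apply: NA; left.
by apply: NA; right; split; exact: beyond_translate.
Qed.

Lemma translate_not_equicontinuous_at_oo :
  ~ ga_equicontinuous_at translate None.
Proof.
move=> /(_ (intoo_ent 1)) [|Y [/nbhs_intooP [N NY] equiY]].
  by exists 1%N.
have YN1 : Y (Some (Posz N.+1)) by apply: NY; right; split => /=.
have := equiY ((- Posz N.+1)%R : Zindiscrete) _ YN1.
by rewrite intoo_entE /= addrN => -[|[]].
Qed.

Theorem theorem2p1 :
  exists (G : topGroup) (X : uniformType) (T : G -> X -> X),
    ~ finite_set [set: G] /\
    hausdorff_space X /\
    ga_is_action T /\ ga_continuous T /\
    ga_top_transitive T /\
    ~ minimal_act T /\
    closure [set x | periodic_pt T x] = [set: X] /\
    ~ sensitive_dep T /\
    ~ ga_equicontinuous T.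
Proof.
exists Zindiscrete, intoo, translate.
split; first exact: infinite_int.
split; first exact: intoo_hausdorff.
split; first exact: translate_action.
split; first exact: translate_continuous.
split.
  apply: (transitive_on_dense_top_transitive open_intoo_meets_int).
  move=> _ _ [a _ <-] [b _ <-]; exists ((b - a)%R : Zindiscrete).
  by rewrite /= addrC subrK.
split.
  apply: (@fixed_point_not_minimal _ _ _ (None : intoo) (Some 0%R)) => //.
  exact: nbhs_intoo_Some.
split.
  apply/seteqP; split => // x _; apply/subset_closure/compact_group_periodic.
    exact: compact_indiscrete.
  exact: translate_action.2.
split; first exact: isolated_not_sensitive (nbhs_intoo_Some 0%R).
by move=> /(_ None); exact: translate_not_equicontinuous_at_oo.
Qed.
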